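(* If $m\ge 2$ and $k\ge 3$, the Spencer operator $\mathcal S^1\colon\operatorname{Hom}(V,\mathfrak a)\to\operatorname{Hom}(\wedge^2V,V)$ is injective.
   Context: $\mathfrak a=\mathfrak{sl}(2,\mathbb R)\times\mathfrak{gl}(m,\mathbb R)$ acting faithfully on $V=V_k\otimes W$, where $V_k=S^k(\mathbb R^2)$ is the irreducible $(k+1)$-dimensional $\mathfrak{sl}(2,\mathbb R)$-module and $W=\mathbb R^m$ the standard $\mathfrak{gl}(m,\mathbb R)$-module. $\mathcal S^1(\phi)(v_1\wedge v_2)=-\phi(v_2)v_1+\phi(v_1)v_2$. *)

From HB Require Import structures.
From mathcomp Require Import all_boot all_order all_algebra.
Set Implicit Arguments. Unset Strict Implicit. Unset Printing Implicit Defensive.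
Import Order.TTheory GRing.Theory Num.Theory.
Local Open Scope ring_scope.

(* V_k = S^k(R^2), with basis u_i = e1^(k-i) e2^i, i = 0..k (indices 'I_k.+1).
   A 2x2 matrix X acts on R^2 = span(e1,e2) by X e_c = sum_r X r c e_r, and is
   extended to S^k(R^2) as a derivation:
     X u_i = (k-i) (X00 u_i + X10 u_(i+1)) + i (X01 u_(i-1) + X11 u_i).
   rhoS k X is the matrix of this endomorphism: (rhoS k X) j i is the
   coefficient of u_j in X u_i. Restricted to sl(2) this is the irreducible
   (k+1)-dimensional representation. *)
Definition rhoS {R : nzRingType} (k : nat) (X : 'M[R]_2) : 'M[R]_(k.+1) :=
  \matrix_(j < k.+1, i < k.+1)
    ((if j == i then (k - i)%:R * X 0 0 + i%:R * X 1 1 else 0)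
     + (if (j : nat) == i.+1 then (k - i)%:R * X 1 0 else 0)
     + (if (j : nat).+1 == i then i%:R * X 0 1 else 0)).

(* V = V_k (x) W with W = R^m, represented as 'M_(k.+1, m):
   the matrix v stands for sum_(i,j) v i j u_i (x) eps_j. *)
Notation Vsp R k m := 'M[R]_(k.+1, m).

Definition in_sl2 {R : nzRingType} (X : 'M[R]_2) : Prop := \tr X = 0.

(* The (faithful) action of a = sl(2) x gl(m) on V = V_k (x) W:
   (X, Y) . (a (x) w) = (X a) (x) w + a (x) (Y w). *)
Definition act {R : nzRingType} (k m : nat) (XY : 'M[R]_2 * 'M[R]_m)
  (v : Vsp R k m) : Vsp R k m :=
  rhoS k XY.1 *m v + v *m (XY.2)^T.

Definition hom_V_a {R : nzRingType} (k m : nat)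
  (phi : Vsp R k m -> 'M[R]_2 * 'M[R]_m) : Prop :=
  [/\ forall (c : R) (u v : Vsp R k m),
        (phi (c *: u + v)).1 = c *: (phi u).1 + (phi v).1,
      forall (c : R) (u v : Vsp R k m),
        (phi (c *: u + v)).2 = c *: (phi u).2 + (phi v).2
    & forall v, in_sl2 (phi v).1].

Definition spencer1 {R : nzRingType} (k m : nat)
  (phi : Vsp R k m -> 'M[R]_2 * 'M[R]_m) (v1 v2 : Vsp R k m) : Vsp R k m :=
  - act (phi v2) v1 + act (phi v1) v2.

(* Since S^1 is linear in phi, it suffices to show that S^1(chi) = 0 forces
   chi = 0, and by linearity it suffices to do so on the basis vectors
   u_i (x) eps_j.  Write chi(u_i (x) eps_j) = (X, Y).  Evaluating S^1(chi) on
   (u_i (x) eps_j) /\ (u_p (x) eps_q) with q <> j (here m >= 2) and reading off the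
   eps_q-components at indices r, p <> i, only X u_p and the scalar Y_qq u_p
   survive.  Because k >= 3, two consecutive indices a, a+1 avoid i; on
   u_a, u_(a+1) the off-diagonal entries of rho(X) force X_10 = X_01 = 0, and
   the difference of the diagonal entries eliminates Y_qq and gives
   X_00 = X_11, hence X = 0 as X is traceless.  With X = 0 everywhere, the
   same equation with r = p <> i reads Y = 0. *)

From mathcomp Require Import all_boot all_order all_algebra.
From mathcomp Require Import zify ring.
Set Implicit Arguments.
Unset Strict Implicit.
Unset Printing Implicit Defensive.
Import GRing.Theory Num.Theory.
Local Open Scope ring_scope.

Lemma rhoSB (R : comNzRingType) k (X Y : 'M[R]_2) :
  rhoS k (X - Y) = rhoS k X - rhoS k Y.
Proof.
apply/matrixP => j i; rewrite !mxE.
by do 3 case: ifP => _; ring.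
Qed.

Lemma actBl (R : comNzRingType) k m (XY XY' : 'M[R]_2 * 'M[R]_m) (v : Vsp R k m) :
  act (XY - XY') v = act XY v - act XY' v.
Proof.
rewrite /act /= rhoSB mulmxBl linearB /= mulmxBr.
by rewrite opprD addrACA.
Qed.

Lemma spencer1B (R : comNzRingType) k m (phi psi : Vsp R k m -> 'M[R]_2 * 'M[R]_m)
    (v1 v2 : Vsp R k m) :
  spencer1 (fun v => phi v - psi v) v1 v2 = spencer1 phi v1 v2 - spencer1 psi v1 v2.
Proof. by rewrite /spencer1 !actBl !opprD !opprK addrACA. Qed.

Lemma hom_V_aB (R : comNzRingType) k m (phi psi : Vsp R k m -> 'M[R]_2 * 'M[R]_m) :
  hom_V_a phi -> hom_V_a psi -> hom_V_a (fun v => phi v - psi v).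
Proof.
move=> [phi1 phi2 phi_sl2] [psi1 psi2 psi_sl2]; split=> [c u v|c u v|v] /=.
- by rewrite phi1 psi1 scalerBr opprD addrACA.
- by rewrite phi2 psi2 scalerBr opprD addrACA.
- by rewrite /in_sl2 linearB /= phi_sl2 psi_sl2 subr0.
Qed.

Lemma act_delta_mx (R : nzRingType) k m (XY : 'M[R]_2 * 'M[R]_m)
    (i r : 'I_k.+1) (j s : 'I_m) :
  act XY (delta_mx i j) r s
    = rhoS k XY.1 r i * (s == j)%:R + (r == i)%:R * XY.2 s j.
Proof.
rewrite /act; move: (rhoS k XY.1) => A; rewrite !mxE; congr (_ + _).
  rewrite (bigD1 i) //= big1 ?addr0 => [|l /negbTE il]; first by rewrite mxE eqxx.
  by rewrite mxE il mulr0.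
rewrite (bigD1 j) //= big1 ?addr0 => [|l /negbTE jl]; first by rewrite !mxE eqxx andbT.
by rewrite !mxE jl andbF mul0r.
Qed.

Lemma spencer1_delta_mx (R : nzRingType) k m (phi : Vsp R k m -> 'M[R]_2 * 'M[R]_m)
    (i p r : 'I_k.+1) (j q s : 'I_m) :
  spencer1 phi (delta_mx i j) (delta_mx p q) r s
    = - (rhoS k (phi (delta_mx p q)).1 r i * (s == j)%:R
         + (r == i)%:R * (phi (delta_mx p q)).2 s j)
      + (rhoS k (phi (delta_mx i j)).1 r p * (s == q)%:R
         + (r == p)%:R * (phi (delta_mx i j)).2 s q).
Proof.
have entryDN (A B : Vsp R k m) : (- A + B) r s = - A r s + B r s by rewrite !mxE.
by rewrite /spencer1 entryDN !act_delta_mx.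
Qed.

Lemma lin_mx_eq0 (R : pzRingType) (V : lmodType R) p n (f : 'M[R]_(p, n) -> V) :
  (forall c u v, f (c *: u + v) = c *: f u + f v) ->
  (forall i j, f (delta_mx i j) = 0) -> forall v, f v = 0.
Proof.
move=> f_lin f_delta v.
have f0 : f 0 = 0.
  have := f_lin 1 0 0; rewrite !scale1r addr0 => f00.
  by apply: (addrI (f 0)); rewrite addr0 -f00.
have fD : {morph f : x y / x + y} by move=> x y; have := f_lin 1 x y; rewrite !scale1r.
rewrite (matrix_sum_delta v) (big_morph f fD f0) big1 // => i _.
rewrite (big_morph f fD f0) big1 // => j _.
by rewrite -[_ *: _]addr0 f_lin f_delta f0 scaler0 addr0.
Qed.

Lemma exists_ord_neq n (i : 'I_n) : (1 < n)%N -> exists j : 'I_n, j != i.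
Proof.
move=> n_gt1; have n_gt0 : (0 < n)%N by lia.
case: (eqVneq i (Ordinal n_gt0)) => [->|i0]; last by exists (Ordinal n_gt0); rewrite eq_sym.
by exists (Ordinal n_gt1); rewrite -val_eqE.
Qed.

Lemma ord2P (i : 'I_2) : i = 0 \/ i = 1.
Proof. by case: i => [[|[|//]] ?]; [left | right]; apply/val_inj. Qed.

Lemma mxtrace2 (R : pzSemiRingType) (X : 'M[R]_2) : \tr X = X 0 0 + X 1 1.
Proof.
rewrite /mxtrace big_ord_recl big_ord1; congr (_ + X _ _); exact/val_inj.
Qed.

Lemma mx2P (R : Type) (X Y : 'M[R]_2) :
  X 0 0 = Y 0 0 -> X 0 1 = Y 0 1 -> X 1 0 = Y 1 0 -> X 1 1 = Y 1 1 -> X = Y.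
Proof.
move=> e00 e01 e10 e11; apply/matrixP => i j.
by case: (ord2P i) => ->; case: (ord2P j) => ->.
Qed.

Lemma rhoS_eq0 (R : numFieldType) k (X : 'M[R]_2) (y : R) (a b : 'I_k.+1) :
  b = a.+1 :> nat -> \tr X = 0 ->
  (forall r q : 'I_k.+1, r \in [:: a; b] -> q \in [:: a; b] ->
     rhoS k X r q + (r == q)%:R * y = 0) ->
  X = 0.
Proof.
move=> ba; rewrite mxtrace2 => trX H.
have ak : (a < k)%N by have := ltn_ord b; rewrite ba.
have := H b a; have := H a b; have := H a a; have := H b b.
rewrite !inE !eqxx ?orbT /= !mxE -!val_eqE /= ba !eqxx !eqSS
  ?(ltn_eqF (ltnSn _)) ?(gtn_eqF (ltnSn _)) ?(ltn_eqF (leqnSn _)) ?(gtn_eqF (leqnSn _)).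
rewrite !addr0 !add0r !mul0r !mul1r !addr0.
move=> /(_ isT isT) ebb /(_ isT isT) eaa /(_ isT isT) eab /(_ isT isT) eba.
have [t kat] : exists t, (k - a)%N = t.+1 by exists (k - a.+1)%N; lia.
have kbt : (k - a.+1)%N = t by lia.
rewrite kat in eaa eba; rewrite kbt in ebb.
have X10 : X 1 0 = 0 by move/eqP: eba; rewrite mulf_eq0 pnatr_eq0 => /eqP.
have X01 : X 0 1 = 0 by move/eqP: eab; rewrite mulf_eq0 pnatr_eq0 => /eqP.
have X00_X11 : X 0 0 = X 1 1.
  apply/eqP; rewrite -subr_eq0.
  have -> : X 0 0 - X 1 1 = (t.+1%:R * X 0 0 + a%:R * X 1 1 + y)
                          - (t%:R * X 0 0 + a.+1%:R * X 1 1 + y).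
    by rewrite !mulrS; ring.
  by rewrite eaa ebb subrr.
have X00 : X 0 0 = 0.
  have : X 0 0 *+ 2 = 0 by rewrite mulr2n {2}X00_X11 trX.
  by move/eqP; rewrite mulrn_eq0 => /eqP.
by apply: mx2P; rewrite ?mxE -?X00_X11.
Qed.

Section SpencerKernel.

Variables (R : numFieldType) (k m : nat) (chi : Vsp R k m -> 'M[R]_2 * 'M[R]_m).
Hypotheses (k_ge3 : (3 <= k)%N) (m_ge2 : (2 <= m)%N) (chi_hom : hom_V_a chi).
Hypothesis chi_ker : forall v1 v2, spencer1 chi v1 v2 = 0.

Lemma spencer1_ker_sl2 i j : (chi (delta_mx i j)).1 = 0.
Proof.
have [q qj] := exists_ord_neq j m_ge2.
have [a [b [ba ai bi]]] : exists a b : 'I_k.+1, [/\ b = a.+1 :> nat, a != i & b != i].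
  case: (leqP i 1) => i_le1; [exists (inord 2), (inord 3) | exists (inord 0), (inord 1)];
    by rewrite -!val_eqE /= !inordK; try split; lia.
have ab_neq_i r : r \in [:: a; b] -> r != i by rewrite !inE => /orP[] /eqP ->.
apply: (rhoS_eq0 (y := (chi (delta_mx i j)).2 q q) ba); first by case: chi_hom => _ _; apply.
move=> r p /ab_neq_i/negbTE ri /ab_neq_i pi.
have := spencer1_delta_mx chi i p r j q q; rewrite chi_ker mxE => /esym.
by rewrite ri eqxx (negbTE qj) !mulr0 !mul0r !add0r oppr0 mulr1 add0r.
Qed.

Lemma spencer1_ker_gl i j : (chi (delta_mx i j)).2 = 0.
Proof.
have rhoS0 : rhoS k 0 = 0 :> 'M[R]_k.+1 by rewrite -(subrr 0) rhoSB subrr.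
have [p pi] := exists_ord_neq i (leqW (ltnW k_ge3)).
apply/matrixP => s q; have := spencer1_delta_mx chi i p p j q s.
rewrite chi_ker mxE => /esym.
by rewrite !spencer1_ker_sl2 rhoS0 (negbTE pi) eqxx !mxE !mul0r !add0r oppr0 add0r mul1r.
Qed.

Lemma spencer1_ker_eq0 v : chi v = 0.
Proof.
case: chi_hom => [lin_sl2 lin_gl _].
rewrite [chi v]surjective_pairing.
rewrite (lin_mx_eq0 (f := fun v => (chi v).1) lin_sl2 spencer1_ker_sl2).
by rewrite (lin_mx_eq0 (f := fun v => (chi v).2) lin_gl spencer1_ker_gl).
Qed.

End SpencerKernel.

Theorem lemma3 (R : realFieldType) (k m : nat) :
  (2 <= m)%N -> (3 <= k)%N ->
  forall phi psi : Vsp R k m -> 'M[R]_2 * 'M[R]_m,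
    hom_V_a phi -> hom_V_a psi ->
    (forall v1 v2, spencer1 phi v1 v2 = spencer1 psi v1 v2) ->
    forall v, phi v = psi v.
Proof.
move=> m_ge2 k_ge3 phi psi phi_hom psi_hom spencer1_eq v.
apply/eqP; rewrite -subr_eq0; apply/eqP.
apply: (spencer1_ker_eq0 k_ge3 m_ge2 (hom_V_aB phi_hom psi_hom)) => v1 v2.
by rewrite spencer1B spencer1_eq subrr.
Qed.
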